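(* Let $(E,+,0)$ be an abelian group with a translation-invariant preorder $\le$ whose positive cone $E_+=\{x\in E:x\ge0\}$ is pointed ($E_+\cap(-E_+)=\{0\}$), and let $u\in E_+$. Let $\mathcal{A}$ be a finite set of group endomorphisms $T:E\to E$, closed under composition, each of which is monotone ($x\le y\Rightarrow T(x)\le T(y)$) and subunital ($T(u)\le u$). Define $d(T)=u-T(u)\ge0$ and assume the cocycle identity \[ d(T\circ S)=d(T)+T(d(S))\quad\text{for all }T,S\in\mathcal{A}. \] Then for every $T\in\mathcal{A}$ there exists $n$ with $1\le n\le|\mathcal{A}|$ such that $T^n(d(T))=0$.
   Context: Translation-invariant means $x\le y$ implies $x+z\le y+z$ for all $z$. *)

From HB Require Import structures.
From mathcomp Require Import all_boot all_order all_algebra.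
From Stdlib Require Import List.
Set Implicit Arguments. Unset Strict Implicit. Unset Printing Implicit Defensive.
Import GRing.Theory.
Local Open Scope ring_scope.

Definition defect (E : zmodType) (u : E) (T : E -> E) : E := u - T u.

From HB Require Import structures.
From mathcomp Require Import all_boot all_order all_algebra.
From Stdlib Require Import List Classical.
From mathcomp Require Import zify.
Set Implicit Arguments.
Unset Strict Implicit.
Unset Printing Implicit Defensive.
Import GRing.Theory.
Local Open Scope ring_scope.

(* The powers T, T^2, ..., T^(|A|+1) all lie in A, so T^i = T^j for some
   1 <= i < j <= |A|+1.  The cocycle identity applied to T^j = T^i o T^(j-i)
   gives T^i(d(T^(j-i))) = 0, and d(T^k) >= d(T) for k >= 1.  Hence
   0 <= T^i(d(T)) <= T^i(d(T^(j-i))) = 0, and pointedness forces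
   T^i(d(T)) = 0. *)

Lemma list_pigeonhole (X : Type) (A : list X) (f : nat -> X) :
  (forall n, (n <= length A)%N -> In (f n) A) ->
  exists i j, (i < j <= length A)%N /\ f i = f j.
Proof.
move=> fA; apply: NNPP => no_collision.
have f_inj : ForallPairs (fun i j => f i = f j -> i = j) (seq 0 (length A).+1).
  move=> i j /in_seq [_ ilt] /in_seq [_ jlt] fij.
  case: (ltngtP i j) => [ij | ji | //]; case: no_collision.
  - by exists i, j; split; [lia | ].
  - by exists j, i; split; [lia | ].
have := NoDup_incl_length (NoDup_map_NoDup_ForallPairs _ f_inj (seq_NoDup _ _)).
rewrite length_map length_seq => /(_ A) le_len.
have /leP : ((length A).+1 <= length A)%coq_nat.
  by apply: le_len => _ /in_map_iff [n [<- /in_seq nlt]]; apply: fA; lia.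
by rewrite ltnn.
Qed.

Lemma additive_map0 (E : zmodType) (f : E -> E) :
  (forall x y, f (x + y) = f x + f y) -> f 0 = 0.
Proof. by move=> f_add; apply: (@addrI _ (f 0)); rewrite -f_add !addr0. Qed.

Section PreorderedGroup.

Variables (E : zmodType) (le : E -> E -> Prop).
Hypothesis le_refl : forall x, le x x.
Hypothesis le_transl : forall x y z, le x y -> le (x + z) (y + z).
Hypothesis pointed : forall x, le 0 x -> le 0 (- x) -> x = 0.

Lemma le_addr_ge0 x y : le 0 y -> le x (x + y).
Proof. by move=> /(le_transl x); rewrite add0r addrC. Qed.

Lemma subr_ge0 x y : le y x -> le 0 (x - y).
Proof. by move=> /(le_transl (- y)); rewrite subrr. Qed.

Lemma ge0_le0_eq0 x : le 0 x -> le x 0 -> x = 0.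
Proof. by move=> x_ge0 /subr_ge0; rewrite sub0r; apply: pointed. Qed.

Variables (u : E) (A : list (E -> E)).
Hypothesis A_add : forall T, In T A -> forall x y, T (x + y) = T x + T y.
Hypothesis A_comp : forall T S, In T A -> In S A -> In (T \o S) A.
Hypothesis A_mono : forall T, In T A -> forall x y, le x y -> le (T x) (T y).
Hypothesis A_sub : forall T, In T A -> le (T u) u.
Hypothesis A_cocycle : forall T S, In T A -> In S A ->
  defect u (T \o S) = defect u T + T (defect u S).

Lemma map_ge0 S x : In S A -> le 0 x -> le 0 (S x).
Proof.
by move=> SA /(A_mono SA); rewrite (additive_map0 (A_add SA)).
Qed.

Lemma defect_ge0 S : In S A -> le 0 (defect u S).
Proof. by move=> SA; apply/subr_ge0/A_sub. Qed.

Variables (T : E -> E).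
Hypothesis TA : In T A.

Lemma iter_in n : (0 < n)%N -> In (iter n T) A.
Proof. by elim: n => [// | [// | n] IH _]; exact: A_comp TA (IH isT). Qed.

Lemma defect_iterD i k : (0 < i)%N -> (0 < k)%N ->
  defect u (iter (i + k) T) = defect u (iter i T) + iter i T (defect u (iter k T)).
Proof.
by move=> i_gt0 k_gt0; rewrite {1}/defect iterD; apply: A_cocycle; apply: iter_in.
Qed.

Lemma defect_le_defect_iter n : (0 < n)%N -> le (defect u T) (defect u (iter n T)).
Proof.
case: n => [// | [_ | n _]]; first exact: le_refl.
rewrite -[n.+2]/(1 + n.+1)%N defect_iterD //=.
by apply/le_addr_ge0/map_ge0/defect_ge0/iter_in.
Qed.

Lemma iter_defect_eq0 i j : (0 < i < j)%N -> iter i T = iter j T ->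
  iter i T (defect u T) = 0.
Proof.
case/andP=> i_gt0 ij eq_ij.
have jE : j = (i + (j - i))%N by lia.
have k_gt0 : (0 < j - i)%N by lia.
have orbit0 : iter i T (defect u (iter (j - i) T)) = 0.
  apply: (@addrI _ (defect u (iter i T))).
  by rewrite addr0 -defect_iterD // -jE eq_ij.
apply: ge0_le0_eq0; first exact: map_ge0 (iter_in i_gt0) (defect_ge0 TA).
rewrite -orbit0; apply: (A_mono (iter_in i_gt0)).
exact: defect_le_defect_iter.
Qed.

End PreorderedGroup.

Theorem theorem9p1
  (E : zmodType) (le : E -> E -> Prop)
  (le_refl : forall x, le x x)
  (le_trans : forall x y z, le x y -> le y z -> le x z)
  (le_transl : forall x y z, le x y -> le (x + z) (y + z))
  (pointed : forall x, le 0 x -> le 0 (- x) -> x = 0)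
  (u : E) (u_ge0 : le 0 u)
  (A : list (E -> E)) (A_nodup : NoDup A)
  (A_add : forall T, In T A -> forall x y, T (x + y) = T x + T y)
  (A_comp : forall T S, In T A -> In S A -> In (T \o S) A)
  (A_mono : forall T, In T A -> forall x y, le x y -> le (T x) (T y))
  (A_sub : forall T, In T A -> le (T u) u)
  (A_cocycle : forall T S, In T A -> In S A ->
     defect u (T \o S) = defect u T + T (defect u S)) :
  forall T, In T A ->
    exists n : nat, (1 <= n <= length A)%N /\ iter n T (defect u T) = 0.
Proof.
move=> T TA.
have [i [j [/andP [ij jN] eq_ij]]] := list_pigeonhole (f := fun n => iter n.+1 T)
  (fun n _ => iter_in A_comp TA (ltn0Sn n)).
exists i.+1; split; first by rewrite ltn0Sn (leq_trans ij jN).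
apply: (iter_defect_eq0 le_refl le_transl pointed A_add A_comp A_mono A_sub
  A_cocycle TA _ eq_ij).
exact: ij.
Qed.
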